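(* Let $E$ be an Archimedean vector lattice and let $F$ be an order dense vector sublattice of $E$. Suppose $F$ has the countable sup property. Then $E$ has the countable sup property in each of the following cases: (a) $F$ is majorizing in $E$; (b) $F$ has a weak unit.
   Context: A sublattice $F$ of $E$ is order dense if for every $x\in E$ with $x>0$ there is $y\in F$ with $0<y\le x$; it is majorizing if for every $x\in E$ there is $y\in F$ with $x\le y$. A vector $e\ge 0$ in $F$ is a weak unit of $F$ if $|x|\wedge e=0$, $x\in F$, implies $x=0$. A vector lattice has the countable sup property if every nonempty subset possessing a supremum contains a countable subset with the same supremum. *)

From mathcomp Require Import all_boot all_order all_algebra.
From mathcomp Require Import boolp classical_sets cardinality reals.
Set Implicit Arguments. Unset Strict Implicit. Unset Printing Implicit Defensive.
Import Order.TTheory GRing.Theory Num.Theory.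
Local Open Scope classical_set_scope.
Local Open Scope ring_scope.

Section VL.
Variables (R : realType) (E : lmodType R) (le : E -> E -> Prop).

Definition lt (x y : E) : Prop := le x y /\ x <> y.

Definition is_sup_in (S A : set E) (x : E) : Prop :=
  S x /\ (forall a, A a -> le a x) /\
  (forall y, S y -> (forall a, A a -> le a y) -> le x y).

Definition is_inf_in (S A : set E) (x : E) : Prop :=
  S x /\ (forall a, A a -> le x a) /\
  (forall y, S y -> (forall a, A a -> le y a) -> le y x).

Definition pair_set (x y : E) : set E := [set z | z = x \/ z = y].

Definition is_vector_lattice : Prop :=
  (forall x, le x x) /\
  (forall x y, le x y -> le y x -> x = y) /\
  (forall x y z, le x y -> le y z -> le x z) /\
  (forall x y z, le x y -> le (x + z) (y + z)) /\
  (forall (a : R) x y, 0 <= a -> le x y -> le (a *: x) (a *: y)) /\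
  (forall x y, exists s, is_sup_in setT (pair_set x y) s).

Definition archimedean_vl : Prop :=
  forall x y : E, (forall n : nat, le 0 (n%:R *: x) /\ le (n%:R *: x) y) -> x = 0.

Definition is_vector_sublattice (F : set E) : Prop :=
  [/\ F 0,
      (forall x y, F x -> F y -> F (x + y)),
      (forall (a : R) x, F x -> F (a *: x))
    & (forall x y s, F x -> F y -> is_sup_in setT (pair_set x y) s -> F s)].

Definition order_dense (F : set E) : Prop :=
  forall x, lt 0 x -> exists y, F y /\ lt 0 y /\ le y x.

Definition majorizing (F : set E) : Prop :=
  forall x, exists y, F y /\ le x y.

Definition weak_unit (F : set E) (e : E) : Prop :=
  [/\ F e, le 0 e &
      forall x ax m, F x -> is_sup_in setT (pair_set x (- x)) ax ->
        is_inf_in setT (pair_set ax e) m -> m = 0 -> x = 0].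

Definition countable_sup_property (S : set E) : Prop :=
  forall (A : set E) (x : E), A `<=` S -> A !=set0 -> is_sup_in S A x ->
    exists B : set E, [/\ B `<=` A, countable B & is_sup_in S B x].

End VL.

From mathcomp Require Import all_boot all_order all_algebra.
From mathcomp Require Import boolp classical_sets cardinality reals.
Set Implicit Arguments. Unset Strict Implicit.
Import GRing.Theory Num.Theory.
Local Open Scope classical_set_scope.
Local Open Scope ring_scope.

(* Since F is order dense and E is Archimedean, an element of E having an
   F-minorant is the supremum of its F-minorants, and dually for F-majorants.
   So if x = sup_i phi i, each phi i has an F-minorant and x has an
   F-majorant, then the differences d - w of F-minorants d of the phi i and
   F-majorants w of x have supremum 0 in F.  By the countable sup property of
   F a countable subset of them also has supremum 0; it comes from countably
   many indices i, and the phi i for these have supremum x.  If F is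
   majorizing this applies to every family.  If e is a weak unit of F and a0
   is in A, it applies for each n to the truncations (a ∨ a0 - a0) ∧ n e,
   whose supremum (x - a0) ∧ n e tends to x - a0 as n grows. *)

Section VectorLattice.
Variables (R : realType) (E : lmodType R) (le : E -> E -> Prop).
Hypothesis HE : is_vector_lattice le.
Hypothesis HA : archimedean_vl le.

Lemma lexx x : le x x.
Proof. by case: HE. Qed.

Lemma le_anti x y : le x y -> le y x -> x = y.
Proof. by case: HE => _ [+ _]; apply. Qed.

Lemma le_trans x y z : le x y -> le y z -> le x z.
Proof. by case: HE => _ [_ [+ _]]; apply. Qed.

Lemma le_scale (a : R) x y : 0 <= a -> le x y -> le (a *: x) (a *: y).
Proof. by case: HE => _ [_ [_ [_ [+ _]]]]; apply. Qed.

Lemma le_add2r z x y : le (x + z) (y + z) = le x y.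
Proof.
have le_addr : forall x y z, le x y -> le (x + z) (y + z).
  by case: HE => _ [_ [_ [+ _]]].
by rewrite propeqE; split=> [/(le_addr _ _ (- z))|/le_addr//]; rewrite !addrK.
Qed.

Lemma le_add2l z x y : le (z + x) (z + y) = le x y.
Proof. by rewrite ![z + _]addrC le_add2r. Qed.

Lemma subr_ge0 x y : le 0 (y - x) = le x y.
Proof. by rewrite -(le_add2r x) add0r subrK. Qed.

Lemma le_subl_addr x y z : le (x - y) z = le x (z + y).
Proof. by rewrite -(le_add2r y) subrK. Qed.

Lemma le_subr_addr x y z : le x (y - z) = le (x + z) y.
Proof. by rewrite -(le_add2r z) subrK. Qed.

Lemma le_opp2 x y : le (- x) (- y) = le y x.
Proof. by rewrite -(le_add2r (x + y)) addKr [- y + _]addrC addrK. Qed.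

Lemma le_add x y z t : le x y -> le z t -> le (x + z) (y + t).
Proof.
by move=> xy zt; apply: (@le_trans _ (y + z)); rewrite ?le_add2r ?le_add2l.
Qed.

Lemma le_scale_nat n x : le 0 x -> le 0 (n%:R *: x).
Proof. by move=> /(le_scale (ler0n R n)); rewrite scaler0. Qed.

Lemma arch_eq0 x y : le 0 x -> (forall n : nat, le (n%:R *: x) y) -> x = 0.
Proof.
by move=> x0 xy; apply: (HA (y := y)) => n; split; [apply: le_scale_nat|].
Qed.

Lemma join_ex x y : exists s, is_sup_in le setT (pair_set x y) s.
Proof. by case: HE => _ [_ [_ [_ [_]]]]. Qed.

Definition join x y : E := projT1 (cid (join_ex x y)).

Definition meet x y : E := x + y - join x y.

Lemma le_joinl x y : le x (join x y).
Proof. by case: (projT2 (cid (join_ex x y))) => _ [+ _]; apply; left. Qed.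

Lemma le_joinr x y : le y (join x y).
Proof. by case: (projT2 (cid (join_ex x y))) => _ [+ _]; apply; right. Qed.

Lemma join_le x y z : le x z -> le y z -> le (join x y) z.
Proof.
case: (projT2 (cid (join_ex x y))) => _ [_ lub] xz yz.
by apply: lub => // a [->|->].
Qed.

Lemma meetDjoin x y : meet x y + join x y = x + y.
Proof. exact: subrK. Qed.

Lemma meet_lel x y : le (meet x y) x.
Proof. by rewrite /meet le_subl_addr le_add2l; apply: le_joinr. Qed.

Lemma meet_ler x y : le (meet x y) y.
Proof.
by rewrite /meet le_subl_addr [x + y]addrC le_add2l; apply: le_joinl.
Qed.

Lemma le_meet x y z : le z x -> le z y -> le z (meet x y).
Proof.
move=> zx zy; rewrite /meet le_subr_addr addrC -le_subr_addr.
apply: join_le; rewrite le_subr_addr; first by rewrite le_add2l.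
by rewrite [x + y]addrC le_add2l.
Qed.

Lemma sup_meet (T : Type) (A : set T) (f : T -> E) y c :
  is_sup_in le setT (f @` A) y ->
  is_sup_in le setT ((fun i => meet (f i) c) @` A) (meet y c).
Proof.
move=> [_ [yub ylub]]; split=> //; split.
  move=> _ [i Ai <-]; apply: le_meet; last exact: meet_ler.
  by apply: le_trans (meet_lel _ _) _; apply: yub; exists i.
move=> v _ vub.
have fK i : A i -> le (f i) (v + join y c - c).
  move=> Ai; have fy : le (f i) y by apply: yub; exists i.
  rewrite le_subr_addr -meetDjoin; apply: le_add; first by apply: vub; exists i.
  by apply: join_le; [apply: le_trans fy (le_joinl _ _)|apply: le_joinr].
have yK : le y (v + join y c - c) by apply: ylub => // _ [i Ai <-]; apply: fK.
by rewrite /meet le_subl_addr -le_subr_addr.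
Qed.

Lemma sup_shift (A : set E) x a0 : is_sup_in le setT A x -> A a0 ->
  is_sup_in le setT ((fun a => join a a0 - a0) @` A) (x - a0).
Proof.
move=> [_ [xub xlub]] Aa0; split=> //; split.
  by move=> _ [a Aa <-]; rewrite le_add2r; apply: join_le; apply: xub.
move=> v _ vub; rewrite le_subl_addr; apply: xlub => // a Aa.
apply: le_trans (le_joinl a a0) _.
by rewrite -le_subl_addr; apply: vub; exists a.
Qed.

Section OrderDenseSublattice.
Variable F : set E.
Hypothesis HF : is_vector_sublattice le F.
Hypothesis Hd : order_dense le F.
Hypothesis Hcsp : countable_sup_property le F.

Lemma F0 : F 0.
Proof. by case: HF. Qed.

Lemma FD x y : F x -> F y -> F (x + y).
Proof. by case: HF => _ + _ _; apply. Qed.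

Lemma FZ (a : R) x : F x -> F (a *: x).
Proof. by case: HF => _ _ + _; apply. Qed.

Lemma FN x : F x -> F (- x).
Proof. by rewrite -scaleN1r; apply: FZ. Qed.

Lemma dense_eq a b : le b a ->
  (forall f, F f -> le 0 f -> le f (a - b) -> f = 0) -> a = b.
Proof.
move=> ba hf; have [//|neq] := EM (a = b).
have ab_gt0 : lt le 0 (a - b).
  by split; [rewrite subr_ge0|move=> /esym/subr0_eq].
by have [f [Ff [[f0 /nesym fneq] fab]]] := Hd ab_gt0; case: fneq; apply: hf.
Qed.

Lemma sup_order_dense (B : set E) s :
  is_sup_in le F B s -> is_sup_in le setT B s.
Proof.
move=> [Fs [sub slub]]; split=> //; split=> // v _ vub.
suff -> : s = meet v s by apply: meet_lel.
apply: dense_eq (meet_ler v s) _ => f Ff f0 fle.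
have : le s (s - f).
  apply: slub => [|b Bb]; first by apply: FD => //; apply: FN.
  apply: le_trans (le_meet (vub b Bb) (sub b Bb)) _.
  by rewrite le_subr_addr addrC -le_subr_addr.
rewrite le_subr_addr -{2}[s]addr0 le_add2l => f_le0.
exact: le_anti.
Qed.

Lemma le_of_minorants a z y0 : F y0 -> le y0 a ->
  (forall y, F y -> le y a -> le y z) -> le a z.
Proof.
move=> Fy0 y0a hz.
have up y : F y -> le y a -> le y (meet z a).
  by move=> Fy ya; apply: le_meet => //; apply: hz.
suff -> : a = meet z a by apply: meet_lel.
apply: dense_eq (meet_ler z a) _ => f Ff f0 fle.
(* the y0 + n f are F-minorants of a, hence lie below z ∧ a, for all n *)
have steps (n : nat) : le (y0 + n%:R *: f) (meet z a).
  elim: n => [|n IH]; first by rewrite scale0r addr0; apply: up.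
  apply: up; first by apply: FD => //; apply: FZ.
  rewrite -natr1 scalerDl scale1r addrA -[a](subrKC (meet z a)).
  exact: le_add.
by apply: (arch_eq0 (y := meet z a - y0)) => // n; rewrite le_subr_addr addrC.
Qed.

Lemma ge_of_majorants x v u : F u -> le x u ->
  (forall w, F w -> le x w -> le v w) -> le v x.
Proof.
move=> Fu xu hv; rewrite -le_opp2.
apply: (le_of_minorants (FN Fu)); first by rewrite le_opp2.
move=> y Fy; rewrite -[y]opprK !le_opp2 => xy.
by apply: hv => //; apply: FN.
Qed.

Section CountableSubfamily.
Variables (T : Type) (A : set T) (phi : T -> E) (x : E).
Hypothesis A_ne : A !=set0.
Hypothesis x_sup : is_sup_in le setT (phi @` A) x.
Hypothesis phi_minor : forall i, A i -> exists2 f, F f & le f (phi i).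
Hypothesis x_major : exists2 u, F u & le x u.

Definition minorants := [set d | F d /\ exists2 i, A i & le d (phi i)].
Definition majorants := [set w | F w /\ le x w].
Definition gaps := [set d - w | d in minorants & w in majorants].

Lemma phi_le_sup i : A i -> le (phi i) x.
Proof. by move=> Ai; apply: x_sup.2.1; exists i. Qed.

Lemma gaps_sub : gaps `<=` F.
Proof. by move=> _ [d [Fd _] [w [Fw _] <-]]; apply: FD => //; apply: FN. Qed.

Lemma gaps_ne : gaps !=set0.
Proof.
have [i Ai] := A_ne; have [f Ff fi] := phi_minor Ai; have [u Fu xu] := x_major.
by exists (f - u), f; [split=> //; exists i|exists u].
Qed.

Lemma sup_gaps : is_sup_in le F gaps 0.
Proof.
split; first exact: F0; split.
  move=> _ [d [_ [i Ai di]] [w [_ xw] <-]]; rewrite le_subl_addr add0r.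
  exact: le_trans di (le_trans (phi_le_sup Ai) xw).
move=> y Fy yub.
have minor_le d : minorants d -> le d (x + y).
  move=> md; rewrite -le_subl_addr; have [u Fu xu] := x_major.
  apply: (ge_of_majorants Fu xu) => w Fw xw.
  rewrite le_subl_addr addrC -le_subl_addr.
  by apply: yub; exists d => //; exists w.
have phi_le i : A i -> le (phi i) (x + y).
  move=> Ai; have [f Ff fi] := phi_minor Ai.
  apply: (le_of_minorants Ff fi) => d Fd di.
  by apply: minor_le; split=> //; exists i.
have : le x (x + y) by apply: x_sup.2.2 => // _ [i Ai <-]; apply: phi_le.
by rewrite -{1}[x]addr0 le_add2l.
Qed.

Lemma countable_subfamily_sup :
  exists B, [/\ B `<=` A, countable B & is_sup_in le setT (phi @` B) x].
Proof.
have [G [Ggaps cG Gsup]] := Hcsp gaps_sub gaps_ne sup_gaps.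
have /choice[g hg] : forall s, exists i, G s ->
    A i /\ exists2 w, le x w & le (s + w) (phi i).
  move=> s.
  have [Gs|nGs] := EM (G s); last by have [i _] := A_ne; exists i.
  have [d [_ [i Ai di]] [w [_ xw] <-]] := Ggaps s Gs.
  by exists i => _; split=> //; exists w; rewrite // subrK.
exists (g @` G); split.
- by move=> _ [s Gs <-]; apply: (hg s Gs).1.
- exact: sub_countable (card_image_le g G) cG.
split=> //; split.
  by move=> _ [_ [s Gs <-] <-]; apply: phi_le_sup; apply: (hg s Gs).1.
move=> z _ zub.
have Gle s : G s -> le s (z - x).
  move=> Gs; have [_ [w xw sw]] := hg s Gs.
  rewrite le_subr_addr.
  apply: le_trans (le_trans sw _); first by rewrite le_add2l.
  by apply: zub; exists (g s) => //; exists s.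
by rewrite -subr_ge0; apply: (sup_order_dense Gsup).2.2.
Qed.

End CountableSubfamily.

Lemma csp_of_majorizing : majorizing le F -> countable_sup_property le setT.
Proof.
move=> Fmaj A x _ A_ne x_sup.
have [B [BA cB]] : exists B,
    [/\ B `<=` A, countable B & is_sup_in le setT (id @` B) x].
  apply: countable_subfamily_sup => //; first by rewrite image_id.
    move=> a _; have [u [Fu au]] := Fmaj (- a).
    by exists (- u); [apply: FN|rewrite -le_opp2 opprK].
  by have [u [Fu xu]] := Fmaj x; exists u.
by rewrite image_id; exists B.
Qed.

Lemma weak_unit_disjoint e f : weak_unit le F e -> F f -> le 0 f ->
  (forall y, le y f -> le y e -> le y 0) -> f = 0.
Proof.
case=> _ e0 He Ff f0 disj; apply: (He f f 0) => //.
  split=> //; split; last by move=> y _; apply; left.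
  move=> _ [->|->]; first exact: lexx.
  by apply: (le_trans _ f0); rewrite -oppr0 le_opp2.
split=> //; split; first by move=> _ [->|->].
by move=> y _ ylow; apply: disj; apply: ylow; [left|right].
Qed.

Lemma le_of_meets_weak_unit e x v : weak_unit le F e -> le 0 x ->
  (forall n : nat, le (meet x (n%:R *: e)) v) -> le x v.
Proof.
move=> He x0 meet_le; have [_ e0 _] := He.
suff -> : x = meet v x by apply: meet_lel.
apply: dense_eq (meet_ler v x) _ => f Ff f0 fle.
(* all multiples of m lie below x, so m = 0 and f is disjoint from e *)
pose m := meet (x - meet v x) e.
have m0 : le 0 m by apply: le_meet => //; rewrite subr_ge0; apply: meet_ler.
have steps (k : nat) : le (k%:R *: m) x.
  elim: k => [|k IH]; first by rewrite scale0r.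
  have h1 : le (k%:R *: m) (meet x (k%:R *: e)).
    by apply: le_meet => //; apply: le_scale (meet_ler _ _).
  have h2 : le m (x - meet x (k%:R *: e)).
    apply: le_trans (meet_lel _ _) _; rewrite le_add2l le_opp2.
    by apply: le_meet; [apply: meet_le|apply: meet_lel].
  rewrite -natr1 scalerDl scale1r -[x](subrKC (meet x (k%:R *: e))).
  exact: le_add.
have m_eq0 : m = 0 := arch_eq0 m0 steps.
apply: (weak_unit_disjoint He Ff f0) => y yf ye.
by rewrite -m_eq0; apply: le_meet => //; apply: le_trans fle.
Qed.

Lemma csp_of_weak_unit e : weak_unit le F e -> countable_sup_property le setT.
Proof.
move=> He A x _ [a0 Aa0] x_sup; have [Fe e0 _] := He.
pose phi (n : nat) a := meet (join a a0 - a0) (n%:R *: e).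
have Bex (n : nat) : exists B, [/\ B `<=` A, countable B &
    is_sup_in le setT (phi n @` B) (meet (x - a0) (n%:R *: e))].
  apply: countable_subfamily_sup; first by exists a0.
  - exact: sup_meet (sup_shift x_sup Aa0).
  - move=> a _; exists 0; first exact: F0.
    by apply: le_meet; [rewrite subr_ge0; apply: le_joinr|apply: le_scale_nat].
  - by exists (n%:R *: e); [apply: FZ|apply: meet_ler].
have [B HB] := choice Bex.
pose C n := if n is k.+1 then B k else [set a0].
have CA : \bigcup_n C n `<=` A.
  by move=> a [[|k] _ /= Ca]; [rewrite Ca|case: (HB k) => + _ _; apply].
exists (\bigcup_n C n); split=> //.
  by apply: bigcup_countable => // -[|k] _; [apply: countable1|case: (HB k)].
split=> //; split; first by move=> a /CA; apply: x_sup.2.1.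
move=> z _ zub; have a0z : le a0 z by apply: zub; exists 0.
rewrite -(le_add2r (- a0)); apply: (le_of_meets_weak_unit He).
  by rewrite subr_ge0; apply: x_sup.2.1.
move=> n; case: (HB n) => _ _ [_ [_ lub]]; apply: lub => // _ [b Bb <-].
apply: le_trans (meet_lel _ _) _; rewrite le_add2r.
by apply: join_le => //; apply: zub; exists n.+1.
Qed.

End OrderDenseSublattice.
End VectorLattice.

Theorem theorem4p5 (R : realType) (E : lmodType R) (le : E -> E -> Prop)
  (HE : is_vector_lattice le) (HA : archimedean_vl le)
  (F : set E) (HF : is_vector_sublattice le F) (Hd : order_dense le F)
  (Hcsp : countable_sup_property le F) :
  (majorizing le F \/ exists e, weak_unit le F e) ->
  countable_sup_property le setT.
Proof.
case=> [Fmaj|[e He]].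
  exact (csp_of_majorizing HE HA HF Hd Hcsp Fmaj).
exact (csp_of_weak_unit HE HA HF Hd Hcsp He).
Qed.
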